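(* Let $q,q',n$ be integers with $q'\ge 2q>3$ and $n>1$. Let $S$ be an $\mathcal{OS}_q(n)$ of period $m$ with ring sequence $[s_0,\ldots,s_{m-1}]$, and for $x\in\mathbb{Z}_q$ let $x'$ denote the class in $\mathbb{Z}_{q'}$ of the integer in $\{0,\ldots,q-1\}$ representing $x$. Define $t_i\in\mathbb{Z}_{q'}$ for $0\le i\le m-1$ by $t_i=(-1)^{i+m-1}s_i'$ if $s_i'\neq 0$ and $t_i=(-1)^{i+m-1}q$ if $s_i'=0$. Let $T'$ be the periodic sequence over $\mathbb{Z}_{q'}$ with ring sequence $[t_0,\ldots,t_{m-1},-t_0,\ldots,-t_{m-1}]$. Then $T'$ is an $\mathcal{SOS}_{q'}(n)$ and $w_{q'}(T')=0$.
   Context: For a periodic sequence $S=(s_i)$ over $\mathbb{Z}_q$ write $\mathbf{s}_n(i)=(s_i,\ldots,s_{i+n-1})$; $\mathbf{u}^R$ denotes the reverse of a tuple and $-\mathbf{u}$ its termwise negative. An $n$-window sequence of period $m$ satisfies $\mathbf{s}_n(i)=\mathbf{s}_n(j)\Rightarrow i\equiv j\pmod m$. An $\mathcal{OS}_q(n)$ is an $n$-window sequence with $\mathbf{s}_n(i)\neq\mathbf{s}_n(j)^R$ for all $i,j$; an $\mathcal{SOS}_q(n)$ is an $\mathcal{OS}_q(n)$ with also $\mathbf{s}_n(i)\neq-\mathbf{s}_n(j)^R$ for all $i,j$. The ring sequence of a sequence of period $m$ is one period. The weight $w(S)$ is the integer sum of one period with terms taken in $\{0,\ldots,q-1\}$;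 $w_q(S)=w(S)\bmod q$. *)

From HB Require Import structures.
From mathcomp Require Import all_boot all_order all_algebra.
Set Implicit Arguments. Unset Strict Implicit. Unset Printing Implicit Defensive.
Import GRing.Theory.
Local Open Scope ring_scope.

(* A periodic sequence is represented by its ring sequence r (one period,
   of length m = size r); its i-th term is r_(i mod m). *)
Section Windows.
Variable V : zmodType.

Definition ring_elt (r : seq V) (i : nat) : V := nth 0 r (i %% size r).

Definition window (r : seq V) (n i : nat) : seq V :=
  mkseq (fun k => ring_elt r (i + k)) n.

Definition is_nwindow (n : nat) (r : seq V) : Prop :=
  (0 < size r)%N /\
  forall i j, window r n i = window r n j -> i = j %[mod size r].

Definition is_OS (n : nat) (r : seq V) : Prop :=
  is_nwindow n r /\ forall i j, window r n i <> rev (window r n j).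

Definition is_SOS (n : nat) (r : seq V) : Prop :=
  is_OS n r /\ forall i j, window r n i <> map -%R (rev (window r n j)).
End Windows.

Definition weight (q : nat) (r : seq 'Z_q) : nat := (\sum_(x <- r) (x : nat))%N.

Definition zlift (q q' : nat) (x : 'Z_q) : 'Z_q' := (x : nat)%:R.

Definition tseq (q q' : nat) (s : seq 'Z_q) : seq 'Z_q' :=
  mkseq (fun i => let x := zlift q' (nth 0 s i) in
                  (-1) ^+ (i + size s - 1) * (if x != 0 then x else q%:R))
        (size s).

Definition Tprime (q q' : nat) (s : seq 'Z_q) : seq 'Z_q' :=
  tseq q' s ++ map -%R (tseq q' s).

(* Let |v| be the smaller of the representatives of v and -v in Z_q', read
   in Z_q.  Every t_i is +-u with u in {1,...,q} and u = s_i (mod q), so this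
   even map sends T' termwise onto two copies of S, and a window of T' equal to
   a window, a reversed window or a negated reversed window of T' would give a
   reversed window of S equal to a window of S.  Two windows of T' with the same
   image are equal or lie at distance m, where they are w and -w; and w = -w
   forces 2u = 0 (mod q') with u <= q <= q'/2, i.e. u = q, so S vanishes on that
   window, which is then a palindrome.  The weight of T' is a sum of pairs
   x + (-x), each equal to 0 or q'. *)

From mathcomp Require Import all_boot all_order all_algebra.
From mathcomp Require Import zify.
Set Implicit Arguments. Unset Strict Implicit. Unset Printing Implicit Defensive.
Import GRing.Theory.
Local Open Scope ring_scope.

Section RingSequences.
Variables V W : zmodType.
Implicit Types r : seq V.

Lemma window_mod r n i : window r n (i %% size r) = window r n i.
Proof. by apply: eq_mkseq => k; rewrite /ring_elt modnDml. Qed.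

Lemma mem_window r n i x : (0 < size r)%N -> x \in window r n i -> x \in r.
Proof. by move=> r_gt0 /mapP[k _ ->]; rewrite mem_nth // ltn_pmod. Qed.

Lemma ring_elt_map (f : V -> W) r X :
  (0 < size r)%N -> ring_elt (map f r) X = f (ring_elt r X).
Proof. by move=> r_gt0; rewrite /ring_elt size_map (nth_map 0) ?ltn_pmod. Qed.

Lemma window_map (f : V -> W) r n i :
  (0 < size r)%N -> window (map f r) n i = map f (window r n i).
Proof.
by move=> r_gt0; rewrite /window /mkseq -map_comp; apply: eq_map => k /=; rewrite ring_elt_map.
Qed.

Lemma ring_elt_cat r1 r2 X : size r1 = size r2 -> (0 < size r1)%N ->
  ring_elt (r1 ++ r2) X =
  nth 0 (if (X %% (size r1 + size r1) < size r1)%N then r1 else r2) (X %% size r1).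
Proof.
rewrite /ring_elt size_cat => <- r1_gt0.
have lt_j : (X %% (size r1 + size r1) < size r1 + size r1)%N.
  by rewrite ltn_pmod ?addn_gt0 ?r1_gt0.
have dvd_m : (size r1 %| size r1 + size r1)%N by rewrite dvdn_addr.
rewrite -(modn_dvdm X dvd_m).
move: (X %% _)%N lt_j => j lt_j.
rewrite nth_cat; case: ltnP => [lt_jm | le_mj]; first by rewrite modn_small.
by rewrite -{2}(subnK le_mj) modnDr modn_small // ltn_subLR.
Qed.

Lemma ring_elt_cat_self r X : (0 < size r)%N -> ring_elt (r ++ r) X = ring_elt r X.
Proof. by move=> r_gt0; rewrite ring_elt_cat //; case: ifP. Qed.

Lemma ring_elt_cat_oppD r X : (0 < size r)%N ->
  ring_elt (r ++ map -%R r) (X + size r) = - ring_elt (r ++ map -%R r) X.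
Proof.
move=> r_gt0; have size_opp : size r = size (map -%R r) by rewrite size_map.
rewrite !ring_elt_cat // modnDr -modnDml.
have lt_Xm : (X %% size r < size r)%N by rewrite ltn_pmod.
have lt_j : (X %% (size r + size r) < size r + size r)%N.
  by rewrite ltn_pmod ?addn_gt0 ?r_gt0.
move: (X %% _)%N lt_j => j lt_j; have [lt_jm | le_mj] := ltnP j (size r).
  by rewrite modn_small ?ltnNge ?leq_addl /= ?(nth_map 0) //; lia.
rewrite -{1}(subnK le_mj) -addnA modnDr modn_small; last lia.
by rewrite ifT ?(nth_map 0) ?opprK //; lia.
Qed.

End RingSequences.

Lemma eq_mod_double m i j : (i < m + m)%N -> (j < m + m)%N -> i = j %[mod m] ->
  [\/ i = j, j = i + m | i = j + m]%N.
Proof.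
wlog le_ij : i j / (i <= j)%N => [hwlog lt_i lt_j eq_ij | lt_i lt_j eq_ij].
  have [le_ij | /ltnW le_ji] := leqP i j; first exact: hwlog.
  by case: (hwlog j i le_ji lt_j lt_i (esym eq_ij)) => ->;
    [constructor 1 | constructor 3 | constructor 2].
have /dvdnP[c def_c] : (m %| j - i)%N by rewrite -eqn_mod_dvd // eq_ij.
by case: c def_c => [|[|c]] def_c; [constructor 1 | constructor 2 |]; nia.
Qed.

Section CatOpp.
Variables (V W : zmodType) (f : V -> W) (t : seq V) (n : nat).
Hypothesis f_even : forall x, f (- x) = f x.
Hypothesis t_gt0 : (0 < size t)%N.

Local Notation T := (t ++ map -%R t).

Lemma map_even_opp (w : seq V) : map f (map -%R w) = map f w.
Proof. by rewrite -map_comp; apply: eq_map. Qed.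

Lemma size_cat_opp : size T = (size t + size t)%N.
Proof. by rewrite size_cat size_map. Qed.

Lemma window_cat_oppD i : window T n (i + size t) = map -%R (window T n i).
Proof.
by rewrite /window /mkseq -map_comp; apply: eq_map => k /=; rewrite addnAC ring_elt_cat_oppD.
Qed.

Lemma map_window_cat_opp i : map f (window T n i) = window (map f t) n i.
Proof.
have T_gt0 : (0 < size T)%N by rewrite size_cat_opp addn_gt0 t_gt0.
rewrite -window_map // map_cat map_even_opp.
by apply: eq_mkseq => k; rewrite ring_elt_cat_self ?size_map.
Qed.

Lemma cat_opp_nwindow : is_nwindow n (map f t) ->
  (forall i, window T n i <> map -%R (window T n i)) -> is_nwindow n T.
Proof.
move=> [_ ft_win] no_self_opp; rewrite /is_nwindow size_cat_opp addn_gt0 t_gt0.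
split=> // i j eq_ij.
have eq_ij_t : i = j %[mod size t].
  by rewrite -(size_map f) (ft_win i j) // -!map_window_cat_opp eq_ij.
have lt_mod k : (k %% (size t + size t) < size t + size t)%N.
  by rewrite ltn_pmod ?addn_gt0 ?t_gt0.
have eq_mod_t k : (k %% (size t + size t) = k %[mod size t])%N.
  by rewrite modn_dvdm ?dvdn_addr.
move: eq_ij; rewrite -(window_mod T n i) -(window_mod T n j) size_cat_opp.
have := eq_mod_double (lt_mod i) (lt_mod j).
rewrite !eq_mod_t => /(_ eq_ij_t)[-> // | -> | ->].
- by rewrite window_cat_oppD => /no_self_opp.
- by rewrite window_cat_oppD => /esym/no_self_opp.
Qed.

Lemma cat_opp_SOS : is_OS n (map f t) ->
  (forall i, window T n i <> map -%R (window T n i)) -> is_SOS n T.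
Proof.
move=> [ft_win ft_os] no_self_opp; split; first split.
- exact: cat_opp_nwindow.
- by move=> i j eq_ij; apply: (ft_os i j); rewrite -!map_window_cat_opp eq_ij map_rev.
- move=> i j eq_ij; apply: (ft_os i j).
  by rewrite -!map_window_cat_opp eq_ij map_even_opp map_rev.
Qed.

End CatOpp.

Lemma val_Zp_opp p (x : 'Z_p) : (1 < p)%N -> (- x : 'Z_p) = ((p - x) %% p)%N :> nat.
Proof. by case: p x => [|[|p]]. Qed.

Lemma ltn_Zp p (x : 'Z_p) : (1 < p)%N -> (x < p)%N.
Proof. by move=> p_gt1; rewrite -[p in (_ < p)%N]Zp_cast ?ltn_ord. Qed.

Section Fold.
Variables q q' : nat.
Hypotheses (q_gt1 : (1 < q)%N) (le_2q_q' : (2 * q <= q')%N).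

Let q'_gt1 : (1 < q')%N. Proof. lia. Qed.

Definition zfold (v : 'Z_q') : 'Z_q := (minn v (- v : 'Z_q'))%:R.

Lemma zfoldN v : zfold (- v) = zfold v.
Proof. by rewrite /zfold opprK minnC. Qed.

Lemma zfold_sign k v : zfold ((-1) ^+ k * v) = zfold v.
Proof. by rewrite -signr_odd; case: odd; rewrite ?expr1 ?mulN1r ?expr0 ?mul1r ?zfoldN. Qed.

Lemma zfold_nat u : (u <= q)%N -> zfold u%:R = u%:R.
Proof.
move=> le_uq; have lt_uq' : (u < q')%N by lia.
rewrite /zfold val_Zp_opp // val_Zp_nat // modn_small //.
case: (posnP u) => [-> | u_gt0]; first by rewrite min0n.
by rewrite modn_small; [congr _%:R | ]; lia.
Qed.

Lemma natr_self_opp u : (u <= q)%N -> (u%:R : 'Z_q') = - u%:R -> (u%:R : 'Z_q) = 0.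
Proof.
move=> le_uq /eqP; rewrite -subr_eq0 opprK -natrD => /eqP uu0.
have /dvdnP[c def_c] : (q' %| u + u)%N.
  by rewrite /dvdn -val_Zp_nat // uu0.
have [-> // | ->] : u = 0%N \/ u = q by case: c def_c => [|[|c]]; nia.
exact: pchar_Zp.
Qed.

Definition posrep (x : 'Z_q) : nat := if x == 0 then q else x.

Lemma posrep_le x : (posrep x <= q)%N.
Proof. by rewrite /posrep; case: eqP => // _; rewrite ltnW ?ltn_Zp. Qed.

Lemma natr_posrep x : (posrep x)%:R = x.
Proof. by rewrite /posrep; case: eqP => [-> | _]; rewrite ?pchar_Zp ?natr_Zp. Qed.

Lemma zlift_posrep x :
  (if zlift q' x != 0 then zlift q' x else q%:R) = (posrep x)%:R.
Proof.
have lt_xq' : (x < q')%N by have := ltn_Zp x q_gt1; lia.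
have -> : (zlift q' x == 0) = (x == 0).
  by rewrite /zlift -val_eqE /= val_Zp_nat // modn_small.
by rewrite /posrep; case: eqP.
Qed.

End Fold.

Arguments zfold q {q'} v.

Section SignedLift.
Variables (q q' n : nat) (s : seq 'Z_q).
Hypotheses (q_gt1 : (1 < q)%N) (le_2q_q' : (2 * q <= q')%N).

Local Notation t := (tseq q' s).

Lemma nth_tseq i : (i < size s)%N ->
  nth 0 t i = (-1) ^+ (i + size s - 1) * (posrep (nth 0 s i))%:R.
Proof. by move=> lt_is; rewrite nth_mkseq //= zlift_posrep. Qed.

Lemma map_zfold_tseq : map (zfold q) t = s.
Proof.
apply: (@eq_from_nth _ 0); first by rewrite size_map size_mkseq.
move=> i; rewrite size_map size_mkseq => lt_is.
rewrite (nth_map 0) ?size_mkseq // nth_tseq // zfold_sign.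
by rewrite zfold_nat ?posrep_le ?natr_posrep.
Qed.

Lemma zfold_self_opp_Tprime x : x \in Tprime q' s -> x = - x -> zfold q x = 0.
Proof.
move=> x_T x_opp; have {x_T} : x \in t.
  move: x_T; rewrite mem_cat => /orP[// | /mapP[y y_t def_x]].
  by rewrite x_opp def_x opprK.
case/(nthP 0) => i; rewrite size_mkseq => lt_is ?; subst x.
rewrite nth_tseq // zfold_sign zfold_nat ?posrep_le //.
apply: (natr_self_opp q_gt1 le_2q_q' (posrep_le q_gt1 _)).
by move: x_opp; rewrite nth_tseq // -mulrN => /lreg_sign.
Qed.

Lemma window_Tprime_not_self_opp : is_OS n s ->
  forall i, window (Tprime q' s) n i <> map -%R (window (Tprime q' s) n i).
Proof.
move=> [[s_gt0 _] s_os] i w_opp; apply: (s_os i i).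
have t_gt0 : (0 < size t)%N by rewrite size_mkseq.
have T_gt0 : (0 < size (t ++ map -%R t))%N by rewrite size_cat addn_gt0 t_gt0.
suff /all_pred1P -> : all (pred1 0) (window s n i) by rewrite rev_nseq.
rewrite -{1}map_zfold_tseq -map_window_cat_opp //; last exact: zfoldN.
apply/allP => _ /mapP[x x_w ->] /=.
apply/eqP; apply: zfold_self_opp_Tprime.
- exact: mem_window x_w.
- by case/(nthP 0): x_w => k lt_kw <-; rewrite {1}w_opp (nth_map 0).
Qed.
End SignedLift.

Lemma weight_mod p (r : seq 'Z_p) : (1 < p)%N ->
  (weight r %% p)%N = \sum_(x <- r) x :> nat.
Proof.
by move=> p_gt1; rewrite -val_Zp_nat // /weight natr_sum; under eq_bigr do rewrite natr_Zp.
Qed.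

Lemma weight_cat_opp p (r : seq 'Z_p) : (1 < p)%N -> (weight (r ++ map -%R r) %% p = 0)%N.
Proof.
move=> p_gt1; rewrite weight_mod //.
suff -> : \sum_(x <- r ++ map -%R r) x = 0 :> 'Z_p by [].
by rewrite big_cat big_map sumrN; apply: subrr.
Qed.

Theorem theorem3p15 (q q' n : nat) (s : seq 'Z_q) :
  (3 < 2 * q)%N -> (2 * q <= q')%N -> (1 < n)%N ->
  is_OS n s ->
  is_SOS n (Tprime q' s) /\ (weight (Tprime q' s) %% q' = 0)%N.
Proof.
move=> lt_3_2q le_2q_q' _ s_os; have q_gt1 : (1 < q)%N by lia.
have t_gt0 : (0 < size (tseq q' s))%N by rewrite size_mkseq; case: s_os => [[]].
split; last by apply: weight_cat_opp; lia.
apply: (cat_opp_SOS (f := zfold q)) => //.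
- exact: zfoldN.
- by rewrite map_zfold_tseq.
- exact: window_Tprime_not_self_opp.
Qed.
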